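(* Let $p,q$ be distinct propositional letters and $\alpha:=p\to(q\looparrowright p)$. The logic $\mathcal{F}\alpha$ is Epstein incomplete, i.e. there is no set $X$ of Epstein relations such that $\mathcal{F}\alpha=\{\varphi\in\mathsf{FOR}:\mathfrak{R}\vDash\varphi\text{ for all }\mathfrak{R}\in X\}$.
   Context: Language: propositional letters $\Phi=\{p_0,p_1,\dots\}$; connectives $\neg$, $\lor,\wedge,\to,\leftrightarrow,\vartriangle,\looparrowright$; $\mathsf{FOR}$ the set of all formulas. An Epstein model is $\langle v,\mathfrak{R}\rangle$ with $v:\Phi\to\{0,1\}$ and $\mathfrak{R}\subseteq\mathsf{FOR}^2$ (an Epstein relation); truth: letters via $v$, boolean connectives classical, $\langle v,\mathfrak{R}\rangle\vDash\varphi\vartriangle\psi$ iff both true and $\langle\varphi,\psi\rangle\in\mathfrak{R}$; $\langle v,\mathfrak{R}\rangle\vDash\varphi\looparrowright\psi$ iff $\varphi\to\psi$ true and $\langle\varphi,\psi\rangle\in\mathfrak{R}$. $\mathfrak{R}\vDash\varphi$ iff true under every valuation. $\mathcal{F}$ is the least set containing all classical tautologies of the language and the axioms $(p\looparrowright q)\to(p\to q)$, $(p\vartriangle q)\leftrightarrow((p\looparrowright q)\wedge(p\wedge q))$, closed under uniform substitution and modus ponens; $\mathcal{F}\alpha$ is the least set containing $\mathcal{F}\cup\{\alpha\}$ closed under uniform substitution and modus ponens. *)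

From Stdlib Require Import Bool.

(* Formulas: letters p_i, negation, binary boolean connectives,
   Epstein conjunction (vartriangle) and Epstein implication (looparrowright). *)
Inductive FOR : Type :=
| Var : nat -> FOR
| Neg : FOR -> FOR
| Or  : FOR -> FOR -> FOR
| And : FOR -> FOR -> FOR
| Imp : FOR -> FOR -> FOR
| Iff : FOR -> FOR -> FOR
| Tri : FOR -> FOR -> FOR
| Loop : FOR -> FOR -> FOR.

Definition EpsteinRel := FOR -> FOR -> Prop.

Fixpoint holds (v : nat -> bool) (R : EpsteinRel) (f : FOR) : Prop :=
  match f with
  | Var n => v n = true
  | Neg a => ~ holds v R a
  | Or a b => holds v R a \/ holds v R b
  | And a b => holds v R a /\ holds v R b
  | Imp a b => holds v R a -> holds v R b
  | Iff a b => holds v R a <-> holds v R b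
  | Tri a b => holds v R a /\ holds v R b /\ R a b
  | Loop a b => (holds v R a -> holds v R b) /\ R a b
  end.

Definition rel_valid (R : EpsteinRel) (f : FOR) : Prop :=
  forall v : nat -> bool, holds v R f.

(* Classical (boolean) evaluation, where formulas with main connective
   vartriangle / looparrowright are treated as atoms: their values are given
   by arbitrary assignments t, l on pairs of formulas. *)
Fixpoint beval (v : nat -> bool) (t l : FOR -> FOR -> bool) (f : FOR) : bool :=
  match f with
  | Var n => v n
  | Neg a => negb (beval v t l a)
  | Or a b => beval v t l a || beval v t l b
  | And a b => beval v t l a && beval v t l b
  | Imp a b => implb (beval v t l a) (beval v t l b)
  | Iff a b => eqb (beval v t l a) (beval v t l b)
  | Tri a b => t a b
  | Loop a b => l a b
  end.

Definition tautology (f : FOR) : Prop :=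
  forall (v : nat -> bool) (t l : FOR -> FOR -> bool), beval v t l f = true.

Fixpoint subst (s : nat -> FOR) (f : FOR) : FOR :=
  match f with
  | Var n => s n
  | Neg a => Neg (subst s a)
  | Or a b => Or (subst s a) (subst s b)
  | And a b => And (subst s a) (subst s b)
  | Imp a b => Imp (subst s a) (subst s b)
  | Iff a b => Iff (subst s a) (subst s b)
  | Tri a b => Tri (subst s a) (subst s b)
  | Loop a b => Loop (subst s a) (subst s b)
  end.

Definition p0 : FOR := Var 0.
Definition p1 : FOR := Var 1.

Definition F_ax1 : FOR := Imp (Loop p0 p1) (Imp p0 p1).
Definition F_ax2 : FOR := Iff (Tri p0 p1) (And (Loop p0 p1) (And p0 p1)).

(* F = F_ext (fun _ => False); F alpha = F_ext (eq alpha). *)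
Inductive F_ext (Gamma : FOR -> Prop) : FOR -> Prop :=
| Fe_taut : forall f, tautology f -> F_ext Gamma f
| Fe_ax1 : F_ext Gamma F_ax1
| Fe_ax2 : F_ext Gamma F_ax2
| Fe_extra : forall f, Gamma f -> F_ext Gamma f
| Fe_subst : forall s f, F_ext Gamma f -> F_ext Gamma (subst s f)
| Fe_mp : forall f g, F_ext Gamma (Imp f g) -> F_ext Gamma f -> F_ext Gamma g.

Definition F_alpha (alpha : FOR) : FOR -> Prop := F_ext (fun f => f = alpha).

Definition logic_of (X : EpsteinRel -> Prop) (f : FOR) : Prop :=
  forall R, X R -> rel_valid R f.

Definition Epstein_complete (L : FOR -> Prop) : Prop :=
  exists X : EpsteinRel -> Prop, forall f, L f <-> logic_of X f.

(* Every Epstein relation validating alpha must relate q to p (evaluate alpha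
   where all letters are true), so every such relation also validates
   beta := (q -> p) -> (q looparrowright p).  But beta is not in F alpha: reading
   looparrowright a b as b and vartriangle as conjunction makes all axioms of
   F alpha true and is preserved by substitution and modus ponens, while beta
   fails when all letters are false. *)

From Stdlib Require Import Bool.

Fixpoint rhs_eval (v : nat -> bool) (f : FOR) : bool :=
  match f with
  | Var n => v n
  | Neg a => negb (rhs_eval v a)
  | Or a b => rhs_eval v a || rhs_eval v b
  | And a b => rhs_eval v a && rhs_eval v b
  | Imp a b => implb (rhs_eval v a) (rhs_eval v b)
  | Iff a b => eqb (rhs_eval v a) (rhs_eval v b)
  | Tri a b => rhs_eval v a && rhs_eval v b
  | Loop _ b => rhs_eval v b
  end.

Definition rhs_valid (f : FOR) : Prop := forall v, rhs_eval v f = true.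

Lemma beval_rhs_eval v f :
  beval v (fun a b => rhs_eval v a && rhs_eval v b) (fun _ b => rhs_eval v b) f
  = rhs_eval v f.
Proof. induction f; simpl; congruence. Qed.

Lemma rhs_eval_subst v s f :
  rhs_eval v (subst s f) = rhs_eval (fun n => rhs_eval v (s n)) f.
Proof. induction f; simpl; congruence. Qed.

Lemma F_ext_rhs_valid (Gamma : FOR -> Prop) :
  (forall g, Gamma g -> rhs_valid g) ->
  forall f, F_ext Gamma f -> rhs_valid f.
Proof.
  intros HGamma f Hf; induction Hf; intro v.
  - rewrite <- beval_rhs_eval; apply H.
  - simpl; destruct (v 0), (v 1); reflexivity.
  - simpl; destruct (v 0), (v 1); reflexivity.
  - apply HGamma, H.
  - rewrite rhs_eval_subst; apply IHHf.
  - specialize (IHHf1 v); simpl in IHHf1.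
    rewrite (IHHf2 v) in IHHf1; exact IHHf1.
Qed.

Lemma rhs_valid_imp_loop p q : rhs_valid (Imp (Var p) (Loop (Var q) (Var p))).
Proof. intro v; simpl; destruct (v p); reflexivity. Qed.

Lemma not_rhs_valid_imp_imp_loop p q :
  ~ rhs_valid (Imp (Imp (Var q) (Var p)) (Loop (Var q) (Var p))).
Proof. intro H; discriminate (H (fun _ => false)). Qed.

Lemma rel_valid_imp_loop_rel R p q :
  rel_valid R (Imp (Var p) (Loop (Var q) (Var p))) -> R (Var q) (Var p).
Proof. intro H; apply (H (fun _ => true)); reflexivity. Qed.

Lemma rel_valid_imp_imp_loop R p q :
  R (Var q) (Var p) -> rel_valid R (Imp (Imp (Var q) (Var p)) (Loop (Var q) (Var p))).
Proof. intros HR v Hqp; split; assumption. Qed.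

Theorem mainTheorem6 : forall p q : nat, p <> q ->
  ~ Epstein_complete (F_alpha (Imp (Var p) (Loop (Var q) (Var p)))).
Proof.
  intros p q _ [X HX].
  apply (not_rhs_valid_imp_imp_loop p q).
  apply (F_ext_rhs_valid (fun f => f = Imp (Var p) (Loop (Var q) (Var p)))).
  - intros g ->; apply rhs_valid_imp_loop.
  - apply HX; intros R HR.
    apply rel_valid_imp_imp_loop, rel_valid_imp_loop_rel.
    apply HX; [apply Fe_extra; reflexivity | exact HR].
Qed.
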